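(* Let $n\ge2$, and set $A=\bigl(\sum_{j=0}^{\lceil n/2\rceil-1}2\cdot4^j\bigr)\bmod 2^n$ (the $n$-bit integer whose bits at odd positions are $1$ and at even positions are $0$) and $B=\bigl(\sum_{j=0}^{\lceil n/2\rceil-1}4^j\bigr)\bmod 2^n$ (bits at even positions $1$, at odd positions $0$). For $x\in\{0,\dots,2^n-1\}$ let $y^{(1)}(x)=(0\dotplus x)\oplus(A\dotplus x)$ and $y^{(2)}(x)=(A\dotplus x)\oplus(B\dotplus x)$. Then the pair $(y^{(1)}(x),y^{(2)}(x))$ determines $x$ modulo $2^{n-1}$: for all $x,x'\in\{0,\dots,2^n-1\}$, if $y^{(1)}(x)=y^{(1)}(x')$ and $y^{(2)}(x)=y^{(2)}(x')$ then $x\equiv x'\pmod{2^{n-1}}$.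
   Context: $a\dotplus b=(a+b)\bmod 2^n$; $\oplus$ is bitwise XOR of $n$-bit integers. These are the queries $(\alpha,\beta)=(0,A)$ and $(\alpha,\beta)=(A,B)$ for the equation $y=(\alpha\dotplus x)\oplus(\beta\dotplus x)$. *)

From Stdlib Require Import Arith List.

Definition addm (n a b : nat) : nat := (a + b) mod 2 ^ n.

Fixpoint sum_upto (k : nat) (f : nat -> nat) : nat :=
  match k with
  | O => 0
  | S k' => sum_upto k' f + f k'
  end.

Definition ceil_half (n : nat) : nat := (n + 1) / 2.

Definition constA (n : nat) : nat :=
  (sum_upto (ceil_half n) (fun j => 2 * 4 ^ j)) mod 2 ^ n.

Definition constB (n : nat) : nat :=
  (sum_upto (ceil_half n) (fun j => 4 ^ j)) mod 2 ^ n.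

Definition yq (n alpha beta x : nat) : nat :=
  Nat.lxor (addm n alpha x) (addm n beta x).

Definition y1 (n x : nat) : nat := yq n 0 (constA n) x.
Definition y2 (n x : nat) : nat := yq n (constA n) (constB n) x.

From Stdlib Require Import Arith Lia Bool.

(* Write carry c x i for the carry entering bit i of c + x, i.e.
   [2^i <= c mod 2^i + x mod 2^i].  For i < n, bit i of
   (alpha [+] x) xor (beta [+] x) equals
      alpha_i xor carry alpha x i xor beta_i xor carry beta x i,
   because the bit x_i cancels.  Since carry 0 x i = false, y1 determines every
   carry of A + x, and then y2 determines every carry of B + x (bits < n).

   Truncated to m = i+1 bits (1 <= m <= n), the alternating constants are
   "balanced": a + b + 1 = 2^m and |a - b| <= 2^i, where a, b are A, B mod 2^m.
   For such a pair, flipping bit i of x while keeping its lower i bits fixed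
   flips the carry into bit i+1 of a + x or of b + x.  Hence the carries at
   positions 1..n-1 recover bits 0..n-2 of x one by one, by induction, which
   is the statement x = x' mod 2^(n-1). *)

Definition carry (c x i : nat) : bool := 2 ^ i <=? c mod 2 ^ i + x mod 2 ^ i.

Lemma mod2_add_parts x y z : (x + y + z) mod 2 = (x mod 2 + y mod 2 + z) mod 2.
Proof.
  rewrite (Nat.div_mod_eq x 2) at 1. rewrite (Nat.div_mod_eq y 2) at 1.
  replace (2 * (x / 2) + x mod 2 + (2 * (y / 2) + y mod 2) + z)
    with (x mod 2 + y mod 2 + z + (x / 2 + y / 2) * 2) by lia.
  apply Nat.Div0.mod_add.
Qed.

Lemma b2n_xor3 t u v w :
  Nat.b2n t = (Nat.b2n u + Nat.b2n v + Nat.b2n w) mod 2 -> t = xorb (xorb u v) w.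
Proof. destruct t, u, v, w; vm_compute; congruence. Qed.

Lemma testbit_add a b i :
  Nat.testbit (a + b) i =
  xorb (xorb (Nat.testbit a i) (Nat.testbit b i)) (carry a b i).
Proof.
  apply b2n_xor3. rewrite !Nat.testbit_spec'. unfold carry.
  assert (HP : 2 ^ i <> 0) by (apply Nat.pow_nonzero; lia).
  set (P := 2 ^ i) in *.
  assert (Ha := Nat.div_mod_eq a P). assert (Hb := Nat.div_mod_eq b P).
  assert (ra := Nat.mod_upper_bound a P HP). assert (rb := Nat.mod_upper_bound b P HP).
  replace (a + b) with ((a / P + b / P) * P + (a mod P + b mod P)) by lia.
  rewrite Nat.div_add_l by exact HP.
  replace ((a mod P + b mod P) / P) with (Nat.b2n (P <=? a mod P + b mod P)).
  - apply mod2_add_parts.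
  - destruct (Nat.leb_spec P (a mod P + b mod P)) as [Hge | Hlt]; simpl.
    + replace (a mod P + b mod P) with (1 * P + (a mod P + b mod P - P)) by lia.
      rewrite Nat.div_add_l, Nat.div_small by lia. lia.
    + rewrite Nat.div_small by lia. reflexivity.
Qed.

Lemma testbit_addm n a b i : i < n ->
  Nat.testbit (addm n a b) i =
  xorb (xorb (Nat.testbit a i) (Nat.testbit b i)) (carry a b i).
Proof. intro Hi. unfold addm. rewrite Nat.mod_pow2_bits_low by exact Hi. apply testbit_add. Qed.

Lemma carry_0_l x i : carry 0 x i = false.
Proof.
  unfold carry. apply Nat.leb_gt. rewrite Nat.Div0.mod_0_l.
  apply Nat.mod_upper_bound, Nat.pow_nonzero. lia.
Qed.

Lemma testbit_yq n alpha beta x i : i < n ->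
  Nat.testbit (yq n alpha beta x) i =
  xorb (xorb (Nat.testbit alpha i) (carry alpha x i))
       (xorb (Nat.testbit beta i) (carry beta x i)).
Proof.
  intro Hi. unfold yq. rewrite Nat.lxor_spec, !(testbit_addm _ _ _ _ Hi).
  destruct (Nat.testbit alpha i), (Nat.testbit beta i), (Nat.testbit x i),
    (carry alpha x i), (carry beta x i); reflexivity.
Qed.

Lemma carries_determined n x x' :
  y1 n x = y1 n x' -> y2 n x = y2 n x' ->
  forall i, i < n ->
    carry (constA n) x i = carry (constA n) x' i /\
    carry (constB n) x i = carry (constB n) x' i.
Proof.
  intros H1 H2 i Hi.
  assert (E1 := f_equal (fun y => Nat.testbit y i) H1).
  assert (E2 := f_equal (fun y => Nat.testbit y i) H2).
  unfold y1, y2 in E1, E2; cbn beta in E1, E2.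
  rewrite !(testbit_yq _ _ _ _ _ Hi), !carry_0_l, Nat.bits_0 in E1.
  rewrite !(testbit_yq _ _ _ _ _ Hi) in E2.
  destruct (Nat.testbit (constA n) i), (Nat.testbit (constB n) i),
    (carry (constA n) x i), (carry (constA n) x' i),
    (carry (constB n) x i), (carry (constB n) x' i);
    simpl in *; split; congruence.
Qed.

Definition geo4 (k : nat) : nat := sum_upto k (fun j => 4 ^ j).

Lemma geo4_closed k : 3 * geo4 k + 1 = 4 ^ k.
Proof. unfold geo4. induction k; simpl in *; lia. Qed.

Lemma geo4_add k t : geo4 (k + t) = geo4 k + 4 ^ k * geo4 t.
Proof.
  unfold geo4. induction t as [|t IH]; cbn [sum_upto].
  - rewrite Nat.add_0_r. lia.
  - rewrite Nat.add_succ_r. cbn [sum_upto]. rewrite IH, Nat.pow_add_r. lia.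
Qed.

Lemma sum_upto_scale k c f : sum_upto k (fun j => c * f j) = c * sum_upto k f.
Proof. induction k as [|k IH]; cbn [sum_upto]; [lia | rewrite IH; lia]. Qed.

Lemma mod_mod_pow2 s m n : m <= n -> (s mod 2 ^ n) mod 2 ^ m = s mod 2 ^ m.
Proof.
  intro H. replace (2 ^ n) with (2 ^ m * 2 ^ (n - m))
    by (rewrite <- Nat.pow_add_r; f_equal; lia).
  rewrite Nat.Div0.mod_mul_r, Nat.mul_comm, Nat.Div0.mod_add. apply Nat.Div0.mod_mod.
Qed.

Lemma mod_add_multiple r q M : r < M -> (r + M * q) mod M = r.
Proof. intro H. rewrite Nat.mul_comm, Nat.Div0.mod_add. apply Nat.mod_small, H. Qed.

Lemma geo4_mod_even c k K : c <= 2 -> k <= K ->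
  (c * geo4 K) mod 2 ^ (2 * k) = c * geo4 k.
Proof.
  intros Hc HkK. replace K with (k + (K - k)) by lia.
  rewrite geo4_add, Nat.pow_mul_r. change (2 ^ 2) with 4.
  assert (Hk := geo4_closed k).
  replace (c * (geo4 k + 4 ^ k * geo4 (K - k)))
    with (c * geo4 k + 4 ^ k * (c * geo4 (K - k))) by lia.
  apply mod_add_multiple. nia.
Qed.

Lemma geo4_mod_odd k K : k < K ->
  (2 * geo4 K) mod 2 ^ (2 * k + 1) = 2 * geo4 k /\
  geo4 K mod 2 ^ (2 * k + 1) = geo4 k + 4 ^ k.
Proof.
  intro HkK.
  assert (E : 2 ^ (2 * k + 1) = 2 * 4 ^ k)
    by (rewrite Nat.pow_add_r, Nat.pow_mul_r; simpl; lia).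
  assert (Hk := geo4_closed k). rewrite E. split.
  - replace K with (k + (K - k)) by lia. rewrite geo4_add.
    replace (2 * (geo4 k + 4 ^ k * geo4 (K - k)))
      with (2 * geo4 k + 2 * 4 ^ k * geo4 (K - k)) by lia.
    apply mod_add_multiple. lia.
  - replace K with (k + 1 + (K - k - 1)) by lia. rewrite !geo4_add.
    change (geo4 1) with 1. rewrite Nat.pow_add_r.
    replace (geo4 k + 4 ^ k * 1 + 4 ^ k * 4 ^ 1 * geo4 (K - k - 1))
      with (geo4 k + 4 ^ k + 2 * 4 ^ k * (2 * geo4 (K - k - 1))) by (simpl; lia).
    apply mod_add_multiple. lia.
Qed.

Definition balanced (a b P : nat) : Prop := a + b + 1 = 2 * P /\ a <= b + P /\ b <= a + P.

Lemma constA_geo4 n : constA n = (2 * geo4 (ceil_half n)) mod 2 ^ n.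
Proof. unfold constA, geo4. rewrite sum_upto_scale. reflexivity. Qed.

Lemma constB_geo4 n : constB n = geo4 (ceil_half n) mod 2 ^ n.
Proof. reflexivity. Qed.

Lemma constants_balanced n i : S i <= n ->
  balanced (constA n mod 2 ^ S i) (constB n mod 2 ^ S i) (2 ^ i).
Proof.
  intro Hi. rewrite constA_geo4, constB_geo4, !mod_mod_pow2 by exact Hi.
  unfold ceil_half, balanced.
  destruct (Nat.Even_or_Odd i) as [[k Hk] | [k Hk]]; subst i.
  - replace (S (2 * k)) with (2 * k + 1) by lia.
    assert (k < (n + 1) / 2) by (apply Nat.div_le_lower_bound; lia).
    destruct (geo4_mod_odd k ((n + 1) / 2)) as [-> ->]; [lia|].
    assert (Hk := geo4_closed k). rewrite Nat.pow_mul_r. simpl; lia.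
  - replace (S (2 * k + 1)) with (2 * (k + 1)) by lia.
    assert (k + 1 <= (n + 1) / 2) by (apply Nat.div_le_lower_bound; lia).
    rewrite (geo4_mod_even 2), <- (Nat.mul_1_l (geo4 ((n + 1) / 2))),
      (geo4_mod_even 1 (k + 1)) by lia.
    assert (Hk := geo4_closed (k + 1)).
    replace (2 ^ (2 * k + 1)) with (2 * 4 ^ k) by (rewrite Nat.pow_add_r, Nat.pow_mul_r; simpl; lia).
    rewrite Nat.pow_add_r in Hk. simpl in *; lia.
Qed.

(* For a balanced pair, setting bit i of the low part flips one of the two carries
   into bit i+1; so those carries determine bit i when the lower bits are known. *)
Lemma balanced_carries_determine_bit a b P l d d' :
  balanced a b P -> l < P -> d <= 1 -> d' <= 1 ->
  (2 * P <=? a + (l + P * d)) = (2 * P <=? a + (l + P * d')) ->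
  (2 * P <=? b + (l + P * d)) = (2 * P <=? b + (l + P * d')) ->
  d = d'.
Proof.
  intros (Hsum & Hab & Hba) Hl Hd Hd' Ca Cb.
  destruct d as [|[|]], d' as [|[|]]; try lia;
    rewrite ?Nat.mul_0_r, ?Nat.mul_1_r in Ca, Cb;
    destruct (Nat.leb_spec (2 * P) (a + (l + 0))), (Nat.leb_spec (2 * P) (a + (l + P))),
      (Nat.leb_spec (2 * P) (b + (l + 0))), (Nat.leb_spec (2 * P) (b + (l + P)));
    discriminate || lia.
Qed.

Lemma low_bits_from_carries n a b x x' :
  (forall i, S i < n -> balanced (a mod 2 ^ S i) (b mod 2 ^ S i) (2 ^ i)) ->
  (forall i, i < n -> carry a x i = carry a x' i /\ carry b x i = carry b x' i) ->
  forall i, i < n -> x mod 2 ^ i = x' mod 2 ^ i.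
Proof.
  intros Hbal Hcarry. induction i as [|i IH]; intro Hi.
  - rewrite Nat.pow_0_r, !Nat.mod_1_r. reflexivity.
  - assert (HP : 2 ^ i <> 0) by (apply Nat.pow_nonzero; lia).
    assert (Hsplit : forall y, y mod 2 ^ S i = y mod 2 ^ i + 2 ^ i * ((y / 2 ^ i) mod 2))
      by (intro y; rewrite Nat.pow_succ_r', Nat.mul_comm; apply Nat.Div0.mod_mul_r).
    destruct (Hcarry (S i) Hi) as [Ca Cb]. unfold carry in Ca, Cb.
    rewrite (Hsplit x), (Hsplit x'), <- (IH ltac:(lia)) in Ca, Cb |- *.
    set (P := 2 ^ i) in *. set (a' := a mod 2 ^ S i) in *. set (b' := b mod 2 ^ S i) in *.
    replace (2 ^ S i) with (2 * P) in Ca, Cb by (symmetry; apply Nat.pow_succ_r').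
    f_equal. f_equal.
    apply (balanced_carries_determine_bit a' b' P (x mod P)); [ | | | | exact Ca | exact Cb].
    + exact (Hbal i Hi).
    + apply Nat.mod_upper_bound, HP.
    + apply Nat.lt_succ_r, Nat.mod_upper_bound. lia.
    + apply Nat.lt_succ_r, Nat.mod_upper_bound. lia.
Qed.

Theorem corollary1 (n : nat) (Hn : 2 <= n) (x x' : nat)
  (Hx : x < 2 ^ n) (Hx' : x' < 2 ^ n)
  (H1 : y1 n x = y1 n x') (H2 : y2 n x = y2 n x') :
  x mod 2 ^ (n - 1) = x' mod 2 ^ (n - 1).
Proof.
  apply (low_bits_from_carries n (constA n) (constB n)).
  - intros i Hi. apply constants_balanced. lia.
  - exact (carries_determined n x x' H1 H2).
  - lia.
Qed.
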